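(* Let $R$ be a maximal subring of a ring $T$ such that the conductor $(R:T)$ is a prime ideal of $T$ which is not a maximal ideal of $T$. Then $R$ is integrally closed in $T$.
   Context: All rings are commutative with $1\neq0$ and subrings are unital. A maximal subring is a proper subring maximal with respect to inclusion among proper subrings. The conductor is $(R:T)=\{x\in T\mid Tx\subseteq R\}$. *)

From HB Require Import structures.
From mathcomp Require Import all_boot all_order all_algebra.
Set Implicit Arguments. Unset Strict Implicit. Unset Printing Implicit Defensive.
Import GRing.Theory.
Local Open Scope ring_scope.

Section Defs.
Variable T : comNzRingType.

Definition is_subring (S : T -> Prop) : Prop :=
  [/\ S 1, (forall x y, S x -> S y -> S (x - y)) &
      (forall x y, S x -> S y -> S (x * y))].

Definition subset (A B : T -> Prop) : Prop := forall x, A x -> B x.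

Definition proper_set (S : T -> Prop) : Prop := exists x, ~ S x.

Definition maximal_subring (R : T -> Prop) : Prop :=
  [/\ is_subring R, proper_set R &
      forall S, is_subring S -> proper_set S -> subset R S -> subset S R].

Definition conductor (R : T -> Prop) : T -> Prop :=
  fun x => forall t : T, R (t * x).

Definition is_ideal (I : T -> Prop) : Prop :=
  [/\ I 0, (forall x y, I x -> I y -> I (x - y)) &
      (forall t x, I x -> I (t * x))].

Definition prime_ideal (I : T -> Prop) : Prop :=
  [/\ is_ideal I, ~ I 1 & forall x y, I (x * y) -> I x \/ I y].

Definition maximal_ideal (I : T -> Prop) : Prop :=
  [/\ is_ideal I, ~ I 1 &
      forall J, is_ideal J -> ~ J 1 -> subset I J -> subset J I].

Definition integral_over (R : T -> Prop) (x : T) : Prop :=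
  exists p : {poly T}, [/\ p \is monic, (forall i, R p`_i) & root p x].

Definition integrally_closed_in (R : T -> Prop) : Prop :=
  forall x : T, integral_over R x -> R x.

End Defs.

From mathcomp Require Import all_boot all_order all_algebra.
From mathcomp Require Import ring.
From Stdlib Require Import Classical.
Set Implicit Arguments. Unset Strict Implicit. Unset Printing Implicit Defensive.
Import GRing.Theory.
Local Open Scope ring_scope.

(* Suppose x is integral over R but x is not in R.  By maximality R[x] = T, so
   T is generated as an R-module by 1, x, ..., x^(n-1).  As the conductor I is
   prime but not maximal, there is a proper ideal J strictly containing I; for
   j in J \ I we have j^2 not in I, hence T = R + j^2 T by maximality, and
   writing j = a + j^2 s produces c := a in (R cap J) \ I.  Again T = R + cT, so
   each generator satisfies g_i = r_i + c * sum_k C_ik g_k with r_i, C_ik in R.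
   By Cramer's rule d := det(1 - cC) satisfies d T in R, i.e. d in I, which is
   contained in J; but d is 1 modulo cT, which is also in J, so 1 is in J. *)

Section SubringClosure.
Variables (T : comNzRingType) (R : T -> Prop).
Hypothesis HR : is_subring R.

Lemma subring1 : R 1. Proof. by case: HR. Qed.

Lemma subringB x y : R x -> R y -> R (x - y).
Proof. by case: HR => _ RB _; apply: RB. Qed.

Lemma subringM x y : R x -> R y -> R (x * y).
Proof. by case: HR => _ _ RM; apply: RM. Qed.

Lemma subring0 : R 0.
Proof. by rewrite -(subrr 1); apply: subringB subring1 subring1. Qed.

Lemma subringN x : R x -> R (- x).
Proof. by move=> Rx; rewrite -sub0r; apply: subringB subring0 Rx. Qed.

Lemma subringD x y : R x -> R y -> R (x + y).
Proof. by move=> Rx Ry; rewrite -[y]opprK; apply: subringB Rx (subringN Ry). Qed.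

Lemma subring_sum (I : Type) (r : seq I) (P : pred I) (F : I -> T) :
  (forall i, P i -> R (F i)) -> R (\sum_(i <- r | P i) F i).
Proof. by move=> RF; apply: big_ind => //; [apply: subring0 | apply: subringD]. Qed.

Lemma subring_prod (I : Type) (r : seq I) (P : pred I) (F : I -> T) :
  (forall i, P i -> R (F i)) -> R (\prod_(i <- r | P i) F i).
Proof. by move=> RF; apply: big_ind => //; [apply: subring1 | apply: subringM]. Qed.

Lemma subring_signr k : R ((-1) ^+ k).
Proof.
elim: k => [|k IHk]; first by rewrite expr0; apply: subring1.
by rewrite exprS; apply: subringM IHk; apply/subringN/subring1.
Qed.

Lemma subring_det n (A : 'M[T]_n) : (forall i j, R (A i j)) -> R (\det A).
Proof.
move=> RA; apply: subring_sum => s _.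
by apply: subringM; [apply: subring_signr | apply: subring_prod].
Qed.

Lemma subring_adj n (A : 'M[T]_n) :
  (forall i j, R (A i j)) -> forall i j, R (\adj A i j).
Proof.
move=> RA i j; rewrite mxE; apply: subringM; first exact: subring_signr.
by apply: subring_det => k l; rewrite !mxE.
Qed.

End SubringClosure.

Section IdealClosure.
Variables (T : comNzRingType) (J : T -> Prop).
Hypothesis HJ : is_ideal J.

Lemma idealB x y : J x -> J y -> J (x - y).
Proof. by case: HJ => _ JB _; apply: JB. Qed.

Lemma idealMl t x : J x -> J (t * x).
Proof. by case: HJ => _ _ JM; apply: JM. Qed.

Lemma idealD x y : J x -> J y -> J (x + y).
Proof.
have J0 : J 0 by case: HJ.
move=> Jx Jy; have JNy : J (- y) by rewrite -sub0r; apply: idealB J0 Jy.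
by rewrite -[y]opprK; apply: idealB Jx JNy.
Qed.

Lemma ideal_det_sub n (A B : 'M[T]_n) :
  (forall i j, J (A i j - B i j)) -> J (\det A - \det B).
Proof.
move=> JAB; have Jcong := big_ind2 (fun u v => J (u - v)).
apply: (Jcong) => [||s _]; first by rewrite subrr; case: HJ.
  by move=> a b a' b' Ja Ja'; rewrite opprD addrACA; apply: idealD.
rewrite -mulrBr; apply: idealMl.
apply: (Jcong) => [||i _]; first by rewrite subrr; case: HJ.
  move=> a b a' b' Ja Ja'.
  have -> : a * a' - b * b' = a * (a' - b') + b' * (a - b) by ring.
  by apply: idealD; apply: idealMl.
exact: JAB.
Qed.

End IdealClosure.

Lemma multiples_ideal (T : comNzRingType) (c : T) :
  is_ideal (fun y => exists s, y = c * s).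
Proof.
split; first by exists 0; rewrite mulr0.
  by move=> _ _ [s ->] [s' ->]; exists (s - s'); rewrite mulrBr.
by move=> t _ [s ->]; exists (t * s); rewrite mulrCA.
Qed.

Lemma det_one_sub_scale (T : comNzRingType) n (c : T) (C : 'M[T]_n) :
  exists s, \det (1%:M - c *: C) = 1 + c * s.
Proof.
have [|s ds] := ideal_det_sub (multiples_ideal c) (B := 1%:M) (A := 1%:M - c *: C).
  move=> i j; exists (- C i j).
  by rewrite !mxE addrAC subrr add0r mulrN.
by exists s; rewrite -ds det1 addrCA subrr addr0.
Qed.

Definition rspan (T : comNzRingType) (R : T -> Prop) n (g : 'I_n -> T) (t : T) :=
  exists2 v : 'I_n -> T, (forall k, R (v k)) & t = \sum_k v k * g k.

Section RSpan.
Variables (T : comNzRingType) (R : T -> Prop) (n : nat) (g : 'I_n -> T).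
Hypothesis HR : is_subring R.

Lemma rspan0 : rspan R g 0.
Proof.
exists (fun=> 0) => [k|]; first exact: subring0.
by rewrite big1 // => k _; rewrite mul0r.
Qed.

Lemma rspanB s t : rspan R g s -> rspan R g t -> rspan R g (s - t).
Proof.
move=> [v Rv ->] [w Rw ->]; exists (fun k => v k - w k) => [k|].
  exact: subringB.
by rewrite -sumrB; apply: eq_bigr => k _; rewrite mulrBl.
Qed.

Lemma rspanD s t : rspan R g s -> rspan R g t -> rspan R g (s + t).
Proof.
move=> Ss St; have -> : s + t = s - (0 - t) by rewrite sub0r opprK.
by apply: rspanB Ss _; apply: rspanB rspan0 St.
Qed.

Lemma rspan_scale r t : R r -> rspan R g t -> rspan R g (r * t).
Proof.
move=> Rr [v Rv ->]; exists (fun k => r * v k) => [k|]; first exact: subringM.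
by rewrite mulr_sumr; apply: eq_bigr => k _; rewrite mulrA.
Qed.

Lemma rspan_sum (I : Type) (r : seq I) (P : pred I) (F : I -> T) :
  (forall i, P i -> rspan R g (F i)) -> rspan R g (\sum_(i <- r | P i) F i).
Proof. by move=> SF; apply: big_ind => //; [apply: rspan0 | apply: rspanD]. Qed.

Lemma rspan_gen i : rspan R g (g i).
Proof.
exists (fun k => (k == i)%:R) => [k|].
  by case: eqP => _; [apply: subring1 | apply: subring0].
by rewrite (bigD1 i) //= eqxx mul1r big1 ?addr0 // => k /negbTE ->; rewrite mul0r.
Qed.

End RSpan.

Section PowerSpan.
Variables (T : comNzRingType) (R : T -> Prop) (n : nat) (x : T).
Hypothesis HR : is_subring R.
Local Notation powspan := (rspan R (fun k : 'I_n => x ^+ k)).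
Hypothesis powspan_deg : powspan (x ^+ n).

Lemma powspan_exp_lt k : (k < n)%N -> powspan (x ^+ k).
Proof.
by move=> ltkn; apply: (rspan_gen (fun k : 'I_n => x ^+ k) HR (Ordinal ltkn)).
Qed.

Lemma powspan_mulX t : powspan t -> powspan (x * t).
Proof.
move=> [v Rv ->]; rewrite mulr_sumr; apply: (rspan_sum HR) => k _.
rewrite mulrCA -exprS; apply: (rspan_scale HR (Rv k)).
have [ltkn|] := ltnP k.+1 n; first exact: powspan_exp_lt.
by move=> lenk; have -> : k.+1 = n by apply/eqP; rewrite eqn_leq ltn_ord lenk.
Qed.

Lemma powspan_exp k : powspan (x ^+ k).
Proof.
elim: k => [|k IHk]; last by rewrite exprS; apply: powspan_mulX.
by case: (posnP n) => [n0|]; [move: powspan_deg; rewrite n0 | apply: powspan_exp_lt].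
Qed.

Lemma subring_sub_powspan r : R r -> powspan r.
Proof.
move=> Rr; rewrite -[r]mulr1 -(expr0 x).
exact: (rspan_scale HR Rr (powspan_exp 0)).
Qed.

Lemma powspan_mul s t : powspan s -> powspan t -> powspan (s * t).
Proof.
move=> [v Rv ->] St; rewrite mulr_suml; apply: (rspan_sum HR) => k _.
rewrite -mulrA; apply: (rspan_scale HR (Rv k)).
elim: (k : nat) => [|j IHj]; first by rewrite expr0 mul1r.
by rewrite exprS -mulrA; apply: powspan_mulX.
Qed.

Lemma powspan_is_subring : is_subring powspan.
Proof.
split; [exact: subring_sub_powspan (subring1 HR) | exact: rspanB HR | exact: powspan_mul].
Qed.

End PowerSpan.

Lemma integral_over_powspan (T : comNzRingType) (R : T -> Prop) (x : T) :
  is_subring R -> integral_over R x ->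
  exists n, rspan R (fun k : 'I_n => x ^+ k) (x ^+ n).
Proof.
move=> HR [p [mon_p Rp /rootP px0]].
have [n size_p] : exists n, size p = n.+1.
  by exists (size p).-1; rewrite prednK // size_poly_gt0 monic_neq0.
have lead_p : p`_n = 1 by move/monicP: mon_p; rewrite lead_coefE size_p.
exists n; exists (fun k => - p`_k) => [k|]; first exact: (subringN HR (Rp k)).
move: px0; rewrite horner_coef size_p big_ord_recr /= lead_p mul1r.
move/eqP; rewrite addrC addr_eq0 => /eqP ->.
by rewrite -sumrN; apply: eq_bigr => k _; rewrite mulNr.
Qed.

Definition add_multiples (T : comNzRingType) (R : T -> Prop) (b t : T) :=
  exists2 r, R r & exists s, t = r + b * s.

Lemma add_multiples_subring (T : comNzRingType) (R : T -> Prop) (b : T) :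
  is_subring R -> is_subring (add_multiples R b).
Proof.
move=> HR; split.
- by exists 1; [exact: (subring1 HR)| exists 0; rewrite mulr0 addr0].
- move=> _ _ [r Rr [s ->]] [r' Rr' [s' ->]].
  exists (r - r'); first exact: (subringB HR Rr Rr').
  by exists (s - s'); rewrite mulrBr opprD addrACA.
- move=> _ _ [r Rr [s ->]] [r' Rr' [s' ->]].
  exists (r * r'); first exact: (subringM HR Rr Rr').
  by exists (s * r' + r * s' + b * s * s'); ring.
Qed.

Section MaximalSubring.
Variables (T : comNzRingType) (R : T -> Prop).
Hypothesis maxR : maximal_subring R.

Lemma maximal_subring_full (S : T -> Prop) s :
  is_subring S -> (forall t, R t -> S t) -> S s -> ~ R s -> forall t, S t.
Proof.
case: maxR => _ _ Rmax SS RS Ss Rs t; apply: NNPP => St.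
exact/Rs/(Rmax S SS (ex_intro _ t St) RS).
Qed.

Lemma add_multiples_full b : ~ conductor R b -> forall t, add_multiples R b t.
Proof.
have [HR _ _] := maxR.
move=> /not_all_ex_not[u Rub].
apply: (maximal_subring_full (add_multiples_subring b HR)) Rub.
  by move=> r Rr; exists r => //; exists 0; rewrite mulr0 addr0.
by exists 0; [exact: (subring0 HR)| exists u; rewrite add0r mulrC].
Qed.

Lemma conductor_gap (J : T -> Prop) j :
  prime_ideal (conductor R) -> is_ideal J -> ~ J 1 -> (forall t, conductor R t -> J t) ->
  J j -> ~ conductor R j -> exists c, [/\ R c, J c & ~ conductor R c].
Proof.
move=> [_ _ Iprime] HJ J1 IJ Jj jNI.
have jjNI : ~ conductor R (j * j) by case/Iprime.
have [a Ra [s ja]] := add_multiples_full jjNI j.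
have a_eq : a = j * (1 - j * s).
  by apply: (addIr (j * j * s)); rewrite -ja; ring.
exists a; split=> //; rewrite a_eq; first by rewrite mulrC; apply: (idealMl HJ _ Jj).
move=> /Iprime[//|/IJ J1js]; apply: J1.
have -> : 1 = (1 - j * s) + s * j by ring.
exact: (idealD HJ J1js (idealMl HJ s Jj)).
Qed.

End MaximalSubring.

Lemma not_maximal_ideal_gap (T : comNzRingType) (I : T -> Prop) :
  is_ideal I -> ~ I 1 -> ~ maximal_ideal I ->
  exists J, [/\ is_ideal J, ~ J 1, (forall t, I t -> J t) & exists2 j, J j & ~ I j].
Proof.
move=> HI I1 Inmax; apply: NNPP => noJ; apply: Inmax; split=> // J HJ J1 IJ j Jj.
by apply: NNPP => jNI; apply: noJ; exists J; split=> //; exists j.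
Qed.

Lemma subring_det_mul_solution (T : comNzRingType) (R : T -> Prop) n
    (M : 'M[T]_n) (y r : 'cV[T]_n) :
  is_subring R -> (forall i j, R (M i j)) -> (forall i, R (r i 0)) ->
  M *m y = r -> forall i, R (\det M * y i 0).
Proof.
move=> HR RM Rr Myr i.
have : (\det M *: y) i 0 = (\adj M *m r) i 0.
  by rewrite -Myr mulmxA mul_adj_mx mul_scalar_mx.
rewrite !mxE => ->; apply: (subring_sum HR) => k _.
by apply: (subringM HR); [apply: (subring_adj HR) | apply: Rr].
Qed.

Lemma conductor_one_add_mul (T : comNzRingType) (R : T -> Prop) n
    (g : 'I_n -> T) (c : T) :
  is_subring R -> (forall t, rspan R g t) -> R c -> (forall t, add_multiples R c t) ->
  exists s, conductor R (1 + c * s).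
Proof.
move=> HR gen Rc cover.
have decomp i : exists rv : T * ('I_n -> T),
    [/\ R rv.1, forall k, R (rv.2 k) & g i = rv.1 + c * \sum_k rv.2 k * g k].
  have [r Rr [s gi]] := cover (g i); have [v Rv sv] := gen s.
  by exists (r, v); split; rewrite //= gi sv.
have [f fP] := fin_all_exists decomp.
pose C := \matrix_(i, k) (f i).2 k; pose M := 1%:M - c *: C.
have [s detM] := det_one_sub_scale c C; exists s; rewrite -detM -/M.
have RM i k : R (M i k).
  rewrite !mxE; apply: (subringB HR).
    by case: eqP => _; [apply: (subring1 HR) | apply: (subring0 HR)].
  by apply: (subringM HR Rc); have [] := fP i.
have Mg : M *m (\col_i g i) = \col_i (f i).1.
  rewrite mulmxBl mul1mx -scalemxAl; apply/matrixP => i j0.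
  rewrite !mxE (ord1 j0); have [_ _ ->] := fP i.
  have -> : \sum_k C i k * (\col_i g i) k 0 = \sum_k (f i).2 k * g k.
    by apply: eq_bigr => k _; rewrite !mxE.
  by rewrite addrK.
have Rdetg i : R (\det M * g i).
  have := subring_det_mul_solution HR RM _ Mg i; rewrite mxE; apply=> k.
  by rewrite mxE; have [] := fP k.
move=> t; have [v Rv ->] := gen t; rewrite mulr_suml.
apply: (subring_sum HR) => k _; rewrite -mulrA [g k * _]mulrC.
exact: (subringM HR (Rv k) (Rdetg k)).
Qed.

Theorem lemma3p1 (T : comNzRingType) (R : T -> Prop) :
  maximal_subring R ->
  prime_ideal (conductor R) ->
  ~ maximal_ideal (conductor R) ->
  integrally_closed_in R.
Proof.
move=> maxR Iprime Inmax x xint; apply: NNPP => xNR.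
have [HR _ _] := maxR; have [Iideal I1 _] := Iprime.
have [J [Jideal J1 IJ [j Jj jNI]]] := not_maximal_ideal_gap Iideal I1 Inmax.
have [c [Rc Jc cNI]] := conductor_gap maxR Iprime Jideal J1 IJ Jj jNI.
have [n xn] := integral_over_powspan HR xint.
have span_x := powspan_exp HR xn 1; rewrite expr1 in span_x.
have gen := maximal_subring_full maxR (powspan_is_subring HR xn)
  (subring_sub_powspan HR xn) span_x xNR.
have [s /IJ Jcs] := conductor_one_add_mul HR gen Rc (add_multiples_full maxR cNI).
apply: J1; rewrite -(addrK (c * s) 1).
by apply: (idealB Jideal Jcs); rewrite mulrC; apply: (idealMl Jideal s Jc).
Qed.
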